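(* Let $G$ be a connected simple planar graph with $f_0$ vertices, $f_1$ edges and $f_2$ faces, and let $p(x)=f_2x^3+f_1x^2+f_0x+2$ be its Euler polynomial. Then all roots of $p(x)$ are real if and only if $(f_0+2)^2\ge 8(f_1+2)$, which is in turn equivalent to $(f_0-2)^2\ge 8f_2$.
   Context: All graphs are finite and simple (no loops, no parallel edges). For a connected planar graph, fix a planar embedding; $f_0,f_1,f_2$ denote the numbers of vertices, edges and faces (the unbounded face included), so that Euler's formula $f_0-f_1+f_2=2$ holds. *)

From HB Require Import structures.
From mathcomp Require Import all_boot all_order all_algebra all_field.
Set Implicit Arguments. Unset Strict Implicit. Unset Printing Implicit Defensive.
Import Order.TTheory GRing.Theory Num.Theory.
Local Open Scope ring_scope.

Definition simple_graph (T : finType) (e : rel T) : Prop :=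
  symmetric e /\ irreflexive e.

Definition connected_graph (T : finType) (e : rel T) : Prop :=
  (0 < #|T|)%N /\ forall x y : T, connect e x y.

Notation dart e := {p : _ * _ | e p.1 p.2}.

(* Reversal of a dart (well defined since e is symmetric). *)
Definition drev (T : finType) (e : rel T) (d : dart e) : dart e :=
  insubd d ((val d).2, (val d).1).

(* This is the standard
   combinatorial description of a (cellular) embedding of a connected graph
   in an orientable surface. *)
Definition rotation_system (T : finType) (e : rel T) (rho : dart e -> dart e) : Prop :=
  [/\ injective rho,
      forall d, (val (rho d)).1 = (val d).1 &
      forall d d', (val d).1 = (val d').1 -> fconnect rho d d'].

Definition face_perm (T : finType) (e : rel T) (rho : dart e -> dart e) (d : dart e) : dart e :=
  rho (drev d).

Definition nverts (T : finType) (e : rel T) : nat := #|T|.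

Definition nedges (T : finType) (e : rel T) : nat :=
  #|[set E : {set T} | [exists x : T, exists y : T, e x y && (E == [set x; y])]]|.

(* Faces = orbits of the face permutation; the graph with no edge (a single
   vertex) has exactly one face. *)
Definition nfaces (T : finType) (e : rel T) (rho : dart e -> dart e) : nat :=
  if #|{: dart e}| == 0%N then 1%N else fcard (face_perm rho) predT.

(* A planar embedding: a rotation system whose surface has Euler
   characteristic 2 (genus 0, i.e. the sphere). *)
Definition planar_embedding (T : finType) (e : rel T) (rho : dart e -> dart e) : Prop :=
  rotation_system rho /\
  (nverts e)%:Z - (nedges e)%:Z + (nfaces rho)%:Z = 2%:Z.

Definition euler_poly (f0 f1 f2 : nat) : {poly algC} :=
  (f2%:R%:P * 'X^3 + f1%:R%:P * 'X^2 + f0%:R%:P * 'X + 2%:R%:P)%R.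

From HB Require Import structures.
From mathcomp Require Import all_boot all_order all_algebra all_field.
From mathcomp Require Import zify ring.
Import Order.TTheory GRing.Theory Num.Theory.
Local Open Scope ring_scope.

(* Euler's relation f1 = f0 + f2 - 2 makes -1 a root of the Euler polynomial:
   p(x) = (x + 1) (f2 x^2 + (f0 - 2) x + 2).  The cubic therefore has only real
   roots iff the quadratic factor does, i.e. iff its discriminant
   (f0 - 2)^2 - 8 f2 is nonnegative; by Euler's relation again this
   discriminant equals (f0 + 2)^2 - 8 (f1 + 2). *)

Section RealQuadratic.

Variables (C : numClosedFieldType) (a b c : C).
Hypotheses (a_real : a \is Num.real) (b_real : b \is Num.real) (c_real : c \is Num.real).

Lemma quadratic_complete_square (z : C) :
  (2 * a * z + b) ^+ 2 = (b ^+ 2 - 4 * a * c) + 4 * a * (a * z ^+ 2 + b * z + c).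
Proof. by ring. Qed.

Lemma quadratic_roots_real (z : C) :
  c != 0 -> 4 * a * c <= b ^+ 2 -> a * z ^+ 2 + b * z + c = 0 -> z \is Num.real.
Proof.
move=> c_neq0 discr_ge0 root_z.
have [a0 | a_neq0] := eqVneq a 0.
  have b_neq0 : b != 0.
    by apply: contraNneq c_neq0 => b0; rewrite -root_z a0 b0 !mul0r !add0r.
  have -> : z = - c / b.
    apply: (mulfI b_neq0); rewrite mulrCA divff // mulr1.
    by apply/eqP; rewrite -addr_eq0 -root_z a0 mul0r add0r.
  by rewrite rpredM ?rpredN ?rpredV.
set d := sqrtC (b ^+ 2 - 4 * a * c).
have d_real : d \is Num.real by apply: sqrtC_real; rewrite subr_ge0.
have two_a_neq0 : 2 * a != 0 by rewrite mulf_neq0 // pnatr_eq0.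
have [y y_real yE] : exists2 y, y \is Num.real & 2 * a * z + b = y.
  have : (2 * a * z + b - d) * (2 * a * z + b + d) = 0.
    by rewrite -subr_sqr quadratic_complete_square root_z sqrtCK; ring.
  move/eqP; rewrite mulf_eq0 subr_eq0 addr_eq0 => /orP[] /eqP ->.
    by exists d.
  by exists (- d); rewrite ?rpredN.
have -> : z = (y - b) / (2 * a) by rewrite -yE addrK mulrC mulKf.
by rewrite rpredM ?rpredB ?rpredV ?rpredM ?realn.
Qed.

Lemma quadratic_nonreal_root :
  a != 0 -> b ^+ 2 < 4 * a * c ->
  exists2 z : C, a * z ^+ 2 + b * z + c = 0 & z \isn't Num.real.
Proof.
move=> a_neq0 discr_lt0; set d := sqrtC (b ^+ 2 - 4 * a * c).
have two_a_neq0 : 2 * a != 0 by rewrite mulf_neq0 // pnatr_eq0.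
pose z := (d - b) / (2 * a).
have zE : 2 * a * z + b = d by rewrite /z mulrC divfK // subrK.
exists z.
  have : 4 * a * (a * z ^+ 2 + b * z + c) = 0.
    by apply: (addrI (b ^+ 2 - 4 * a * c)); rewrite -quadratic_complete_square zE sqrtCK addr0.
  by move/eqP; rewrite !mulf_eq0 (negbTE a_neq0) pnatr_eq0 /= => /eqP.
apply: contraTN discr_lt0 => z_real.
have d_real : d \is Num.real by rewrite -zE rpredD // rpredM // rpredM ?realn.
by move: d_real; rewrite realEsqr sqrtCK subr_ge0 -real_leNgt ?rpredX ?rpredM ?realn.
Qed.

Lemma quadratic_real_rootsP :
  c != 0 ->
  (forall z : C, a * z ^+ 2 + b * z + c = 0 -> z \is Num.real) <-> 4 * a * c <= b ^+ 2.
Proof.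
move=> c_neq0; split=> [all_real | discr_ge0 z]; last exact: quadratic_roots_real.
have [a0 | a_neq0] := eqVneq a 0; first by rewrite a0 mulr0 mul0r -realEsqr.
rewrite real_leNgt ?rpredX ?rpredM ?realn //; apply/negP => discr_lt0.
by have [z /all_real z_real] := quadratic_nonreal_root a_neq0 discr_lt0; rewrite z_real.
Qed.

End RealQuadratic.

Lemma planar_euler_relation (T : finType) (e : rel T) (rho : dart e -> dart e) :
  planar_embedding rho -> (nedges e + 2 = nverts e + nfaces rho)%N.
Proof. by case=> _; lia. Qed.

Lemma horner_euler_poly (f0 f1 f2 : nat) (z : algC) :
  (f1 + 2 = f0 + f2)%N ->
  (euler_poly f0 f1 f2).[z] = (z + 1) * (f2%:R * z ^+ 2 + (f0%:R - 2) * z + 2).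
Proof.
move=> euler.
have f1E : (f1%:R : algC) = f0%:R + f2%:R - 2.
  by apply: (addIr 2); rewrite subrK -!natrD euler.
by rewrite /euler_poly !(hornerD, hornerM, hornerC, hornerXn, hornerX) f1E; ring.
Qed.

Lemma euler_poly_real_rootsP (f0 f1 f2 : nat) :
  (f1 + 2 = f0 + f2)%N ->
  (forall z : algC, root (euler_poly f0 f1 f2) z -> z \is Num.real)
  <-> 8 * f2%:R <= (f0%:R - 2) ^+ 2 :> algC.
Proof.
move=> euler; have -> : 8 * f2%:R = 4 * f2%:R * 2 :> algC by ring.
rewrite -quadratic_real_rootsP ?rpredB ?realn ?pnatr_eq0 //.
split=> all_real z root_z.
  by apply: all_real; rewrite /root horner_euler_poly // root_z mulr0.
move: root_z; rewrite /root horner_euler_poly // mulf_eq0 addr_eq0.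
by case/orP=> [/eqP-> | /eqP/all_real //]; rewrite rpredN rpred1.
Qed.

Theorem mainTheorem1 (T : finType) (e : rel T) (rho : dart e -> dart e) :
  simple_graph e -> connected_graph e -> planar_embedding rho ->
  ((forall z : algC, root (euler_poly (nverts e) (nedges e) (nfaces rho)) z ->
       z \is Num.real)
   <-> (8 * ((nedges e)%:Z + 2) <= ((nverts e)%:Z + 2) ^+ 2)%R)
  /\
  ((8 * ((nedges e)%:Z + 2) <= ((nverts e)%:Z + 2) ^+ 2)%R
   <-> (8 * (nfaces rho)%:Z <= ((nverts e)%:Z - 2) ^+ 2)%R).
Proof.
move=> _ _ /planar_euler_relation euler.
set f0 := nverts e in euler *; set f1 := nedges e in euler *.
set f2 := nfaces rho in euler *.
have discrE : (f0%:Z + 2) ^+ 2 - 8 * (f1%:Z + 2) = (f0%:Z - 2) ^+ 2 - 8 * f2%:Z.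
  have f1E : f1%:Z = f0%:Z + f2%:Z - 2 by lia.
  by rewrite f1E; ring.
have discr_iff : 8 * (f1%:Z + 2) <= (f0%:Z + 2) ^+ 2 <-> 8 * f2%:Z <= (f0%:Z - 2) ^+ 2.
  by rewrite -subr_ge0 discrE subr_ge0.
split=> //; rewrite discr_iff euler_poly_real_rootsP //.
by rewrite -(ler_int algC) rmorphM rmorphXn rmorphB.
Qed.
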